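(* For each $1\le i\le m-1$, $$\lambda_{1,\rm rig}^{-1}\big(\phi_{i,\rm rig}^{-1}(\mathfrak Y_{\rm rig}[0,1))\big)=\lambda_{2,\rm rig}^{-1}\big(\phi_{i+1,\rm rig}^{-1}(\mathfrak Y_{\rm rig}[0,1))\big).$$
   Context: $p$ prime; $L_0/\mathbb Q_p$ finite, ring of integers $\mathcal O_0$, residue field $\kappa$. $X,Y$ curves over $\mathcal O_0$ (reduced, flat separated finite type, connected one-dimensional geometric fibres), $\pi:Y\to X$ finite flat, $Y\otimes\kappa$ reduced with two irreducible components (one of them the image of a section $s$ of $\pi\otimes\kappa$), meeting at $\kappa$-rational ordinary double points; $w$ (resp. $\delta$) an $\mathcal O_0$-automorphism of $Y$ whose reduction interchanges (resp. preserves) the components. $\mathfrak Y_{\rm rig}$ is the Raynaud generic fibre of the formal completion of $Y$ along its special fibre. The measure of singularity $\nu_{\mathfrak Y}$ of Goren–Kassaei is a function on points of $\mathfrak Y_{\rm rig}$ with values in $\mathbb Q\cap[0,1]$ ($0$/$1$ on points specializing to nonsingular points of $s(X\otimes\kappa)$/the other component, a normalized annulus-parameter valuation on residue annuli of singular points); known: $\nu_{\mathfrak Y}(\delta_{\rm rig}Q)=\nu_{\mathfrak Y}(Q)$. $\mathfrak Y_{\rm rig}I=\{\nu_{\mathfrak Y}\in I\}$. $\mathfrak Y^0_{\rm rig}$ is a rigid curve over $L_0$ with morphisms $\pi_{1,\rm rig},\pi'_{1,\rm rig}:\mathfrak Y^0_{\rm rig}\to\mathfrak Y_{\rm rig}$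 and $\pi_{2,\rm rig}:=w_{\rm rig}\pi'_{1,\rm rig}$. $m\ge1$; $X(m)$ a curve over $\mathcal O_0$ with $\mathfrak X(m)_{\rm rig}$ the generic fibre of its formal completion; $\mathfrak X^0(m)_{\rm rig}$ a rigid curve over $L_0$ with finite flat $\lambda_{1,\rm rig},\lambda_{2,\rm rig}:\mathfrak X^0(m)_{\rm rig}\to\mathfrak X(m)_{\rm rig}$; for $1\le i\le m$ morphisms $\phi_i:X(m)\to Y$ and $\eta_{i,\rm rig}:\mathfrak X^0(m)_{\rm rig}\to\mathfrak Y^0_{\rm rig}$ with $\phi_{i,\rm rig}\lambda_{j,\rm rig}=\pi_{j,\rm rig}\eta_{i,\rm rig}$ for $j=1,2$, and $\phi_{i,\rm rig}\lambda_{1,\rm rig}=\delta_{\rm rig}\pi_{2,\rm rig}\eta_{i+1,\rm rig}$ for $1\le i\le m-1$. *)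

(* MathComp (+ mathcomp-classical sets).
   Rigid spaces are modelled by their types of points; morphisms of rigid
   spaces by the induced maps on points. *)
From mathcomp Require Import all_boot all_order all_algebra.
From mathcomp Require Import boolp classical_sets.
Set Implicit Arguments. Unset Strict Implicit. Unset Printing Implicit Defensive.
Import Order.TTheory GRing.Theory Num.Theory.
Local Open Scope ring_scope.
Local Open Scope classical_set_scope.

Definition nu_region (Yrig : Type) (nu : Yrig -> rat) (I : interval rat)
  : set Yrig := [set Q | nu Q \in I].

From mathcomp Require Import all_boot all_order all_algebra.
From mathcomp Require Import boolp classical_sets.
Import Order.TTheory GRing.Theory Num.Theory.
Local Open Scope ring_scope.
Local Open Scope classical_set_scope.

(* Both sides are preimages of the same region: on points of X^0(m), the
   relation phi_i lambda_1 = delta pi_2 eta_{i+1} = delta phi_{i+1} lambda_2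
   identifies phi_i lambda_1 with phi_{i+1} lambda_2 up to delta, which
   preserves nu and hence every region Y_rig I. *)

Lemma nu_region_invariant {Yrig : Type} {nu : Yrig -> rat} {g : Yrig -> Yrig} :
  (forall Q, nu (g Q) = nu Q) ->
  forall I : interval rat, g @^-1` nu_region nu I = nu_region nu I.
Proof. by move=> nu_g I; apply/seteqP; split => Q; rewrite /nu_region /= nu_g. Qed.

Theorem lemma3p5
  (Yrig Y0rig Xmrig X0mrig : Type)
  (nu : Yrig -> rat)
  (nu_range : forall Q, 0 <= nu Q <= 1)
  (w_rig delta_rig : Yrig -> Yrig)
  (nu_delta : forall Q, nu (delta_rig Q) = nu Q)
  (pi1 pi1' : Y0rig -> Yrig)
  (m : nat) (hm : (1 <= m)%N)
  (lambda1 lambda2 : X0mrig -> Xmrig)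
  (phi : nat -> Xmrig -> Yrig) (eta : nat -> X0mrig -> Y0rig)
  (pi2 := fun P => w_rig (pi1' P))
  (H1 : forall i, (1 <= i <= m)%N -> forall P, phi i (lambda1 P) = pi1 (eta i P))
  (H2 : forall i, (1 <= i <= m)%N -> forall P, phi i (lambda2 P) = pi2 (eta i P))
  (H3 : forall i, (1 <= i <= m - 1)%N -> forall P,
         phi i (lambda1 P) = delta_rig (pi2 (eta i.+1 P)))
  (i : nat) (hi : (1 <= i <= m - 1)%N) :
  lambda1 @^-1` (phi i @^-1` nu_region nu (Interval (BLeft 0) (BLeft 1))) =
  lambda2 @^-1` (phi i.+1 @^-1` nu_region nu (Interval (BLeft 0) (BLeft 1))).
Proof.
have hi1 : (1 <= i.+1 <= m)%N.
  by case/andP: hi => _ le_im /=; rewrite -(leq_add2r 1) subnK // addn1 in le_im.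
have phi_lambda : phi i \o lambda1 = delta_rig \o (phi i.+1 \o lambda2).
  by apply/funext => P /=; rewrite (H3 i hi) (H2 _ hi1).
rewrite -[in RHS](nu_region_invariant nu_delta).
by rewrite -[LHS]/((phi i \o lambda1) @^-1` _) phi_lambda.
Qed.
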